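(* Let $X$ be a proper geodesic metric space with a convergence compactification $(\partial X,[\cdot])$. Given $r\ge C>0$, there exist $\hat r=\hat r(r,C)$ and $L_0=L_0(r,C)$ with the following property. Given $L\ge L_0$ and $\theta\in(0,1]$, let $\gamma$ be a geodesic ray starting at a point $o\in X$ that is $(r,C,L)$-contracting at $\theta$-frequency, and assume its terminal class $[\gamma^+]$ consists of non-pinched points. Then every geodesic ray from $o$ ending at $[\gamma^+]$ is $(\hat r,C,L)$-contracting at $\theta$-frequency.
   Context: $\pi_A$ is nearest-point projection; a closed $U$ is $C$-contracting if every geodesic $\gamma$ with $d(\gamma,U)\ge C$ has $\mathrm{diam}(\pi_U(\gamma))\le C$. Convergence compactification: $\overline X=X\cup\partial X$ metrizable, $X$ open dense, isometries extend to homeomorphisms, $\partial X$ has an $\mathrm{Isom}(X)$-invariant partition $[\cdot]$. A sequence accumulates into $[\xi]$ if all its accumulation points lie in $[\xi]$; a ray ends at $[\xi]$ if every unbounded sequence of its points accumulates into $[\xi]$. Sets $A_n$ are escaping if $d(o,A_n)\to\infty$; $\Omega_o(A)=\{x:\mathrm{diam}([o,x]\cap A)\ge 10C\}$. Axioms: (A) each contracting geodesic ray accumulates into a closed class and sequences with escaping projections to it accumulate into that class; (B) for an escaping sequence of $C$-contracting quasi-geodesics $\gamma_n$, some subsequence $A_n$ of $\gamma_n\cup\Omega_o(\gamma_n)$ and some class $[\xi]$ satisfy: every convergent sequence $x_n\in A_n$ tends into $[\xi]$; (C) non-pinched points exist, where $\xi$ is non-pinched if whenever $x_n,y_n\in X$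 converge to $[\xi]$ the geodesic segments $[x_n,y_n]$ are escaping. A geodesic segment $\gamma$ is $(r,C,L)$-contracting at $\theta$-frequency if for every $0<t<(1-\theta)\ell(\gamma)$ there are an interval $[s-L/2,s+L/2]\subseteq[t,t+\theta\ell(\gamma)]$ and a $C$-contracting geodesic $p$ with $d(\gamma(u),p)\le r$ on that interval; a geodesic ray is so if there is $R_0$ such that every initial segment $\gamma[0,t]$, $t\ge R_0$, is. Such a ray (for $L$ large) accumulates into a single class $[\gamma^+]$. *)

From HB Require Import structures.
From mathcomp Require Import all_boot all_order all_algebra.
From mathcomp Require Import all_classical all_reals all_analysis.
Import numFieldTopology.Exports numFieldNormedType.Exports.
Set Implicit Arguments. Unset Strict Implicit. Unset Printing Implicit Defensive.
Import Order.TTheory GRing.Theory Num.Theory.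
Local Open Scope classical_set_scope.
Local Open Scope ring_scope.

Definition is_metric {R : realType} {X : Type} (d : X -> X -> R) : Prop :=
  (forall x y, d x y = 0 <-> x = y) /\
  (forall x y, d x y = d y x) /\
  (forall x y z, d x z <= d x y + d y z).

Definition dconv {R : realType} {X : Type} (d : X -> X -> R)
  (u : nat -> X) (y : X) : Prop :=
  (fun n => d (u n) y) @ \oo --> (0 : R).

Definition is_proper {R : realType} {X : Type} (d : X -> X -> R) : Prop :=
  forall (x : X) (r : R) (u : nat -> X), (forall n, d x (u n) <= r) ->
    exists (phi : nat -> nat) (y : X),
      (forall n, (phi n < phi n.+1)%N) /\ d x y <= r /\ dconv d (u \o phi) y.

Definition isom_on {R : realType} {X : Type} (d : X -> X -> R)
  (I : set R) (f : R -> X) : Prop :=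
  forall s t, I s -> I t -> d (f s) (f t) = `|s - t|.

Definition geod_seg {R : realType} {X : Type} (d : X -> X -> R)
  (f : R -> X) (l : R) : Prop :=
  0 <= l /\ isom_on d `[0, l] f.

Definition geod_from_to {R : realType} {X : Type} (d : X -> X -> R)
  (g : R -> X) (x y : X) : Prop :=
  g 0 = x /\ g (d x y) = y /\ geod_seg d g (d x y).

Definition is_geodesic_space {R : realType} {X : Type} (d : X -> X -> R) : Prop :=
  forall x y : X, exists g : R -> X, geod_from_to d g x y.

Definition geod_ray {R : realType} {X : Type} (d : X -> X -> R)
  (f : R -> X) : Prop := isom_on d `[0, +oo[ f.

Definition closed_interval {R : realType} (I : set R) : Prop :=
  I !=set0 /\ closed I /\
  (forall a b z, I a -> I b -> a <= z -> z <= b -> I z).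

(* a geodesic (segment, ray or line), seen as a subset of X *)
Definition geodesic_set {R : realType} {X : Type} (d : X -> X -> R)
  (U : set X) : Prop :=
  exists (I : set R) (f : R -> X),
    closed_interval I /\ isom_on d I f /\ U = f @` I.

Definition quasi_geodesic_set {R : realType} {X : Type} (d : X -> X -> R)
  (U : set X) : Prop :=
  exists (lam c : R) (I : set R) (f : R -> X),
    1 <= lam /\ 0 <= c /\ closed_interval I /\
    (forall s t, I s -> I t ->
        `|s - t| / lam - c <= d (f s) (f t) /\
        d (f s) (f t) <= lam * `|s - t| + c) /\
    U = f @` I.

Definition dclosed {R : realType} {X : Type} (d : X -> X -> R) (U : set X) : Prop :=
  forall x, (forall e : R, 0 < e -> exists u, U u /\ d x u < e) -> U x.

Definition dist_le {R : realType} {X : Type} (d : X -> X -> R)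
  (x : X) (U : set X) (r : R) : Prop :=
  forall e : R, 0 < e -> exists u, U u /\ d x u < r + e.

Definition set_dist_ge {R : realType} {X : Type} (d : X -> X -> R)
  (A U : set X) (c : R) : Prop :=
  forall a u, A a -> U u -> c <= d a u.

Definition diam_le {R : realType} {X : Type} (d : X -> X -> R)
  (S : set X) (c : R) : Prop :=
  forall a b, S a -> S b -> d a b <= c.

Definition diam_ge {R : realType} {X : Type} (d : X -> X -> R)
  (S : set X) (c : R) : Prop :=
  forall e : R, 0 < e -> exists a b, S a /\ S b /\ c - e < d a b.

Definition proj {R : realType} {X : Type} (d : X -> X -> R)
  (U A : set X) : set X :=
  [set u | U u /\ exists x, A x /\ forall v, U v -> d x u <= d x v].

Definition contracting {R : realType} {X : Type} (d : X -> X -> R)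
  (C : R) (U : set X) : Prop :=
  dclosed d U /\
  forall g : set X, geodesic_set d g -> set_dist_ge d g U C ->
    diam_le d (proj d U g) C.

Definition escaping {R : realType} {X : Type} (d : X -> X -> R)
  (A : nat -> set X) : Prop :=
  forall (o : X) (M : R), \forall n \near \oo, forall a, A n a -> M <= d o a.

Definition to_pinfty {R : realType} (t : nat -> R) : Prop :=
  forall M : R, \forall n \near \oo, M <= t n.

Definition Omega {R : realType} {X : Type} (d : X -> X -> R)
  (C : R) (o : X) (A : set X) : set X :=
  [set x | exists g : R -> X, geod_from_to d g o x /\
             diam_ge d ((g @` `[0, d o x]) `&` A) (10%:R * C)].

Definition boundary {X : Type} {Xbar : Type} (iota : X -> Xbar) : set Xbar :=
  ~` range iota.

Definition cls {X : Type} {Xbar : Type} (iota : X -> Xbar)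
  (rel : Xbar -> Xbar -> Prop) (xi : Xbar) : set Xbar :=
  [set eta | boundary iota eta /\ rel xi eta].

Definition accum_into {X : Type} {Xbar : topologicalType}
  (iota : X -> Xbar) (rel : Xbar -> Xbar -> Prop) (x : nat -> X) (xi : Xbar) : Prop :=
  cluster ((fun n => iota (x n)) @ \oo) `<=` cls iota rel xi.

Definition ends_at {R : realType} {X : Type} {Xbar : topologicalType}
  (iota : X -> Xbar) (rel : Xbar -> Xbar -> Prop) (g : R -> X) (xi : Xbar) : Prop :=
  forall t : nat -> R, (forall n, 0 <= t n) -> to_pinfty t ->
    accum_into iota rel (fun n => g (t n)) xi.

Definition isometry {R : realType} {X : Type} (d : X -> X -> R) (phi : X -> X) : Prop :=
  (forall x y, d (phi x) (phi y) = d x y) /\ (forall y, exists x, phi x = y).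

Definition homeomorphism {T : topologicalType} (F : T -> T) : Prop :=
  exists G : T -> T, cancel F G /\ cancel G F /\ continuous F /\ continuous G.

Definition compactification_with_partition {R : realType} {X : Type}
  (d : X -> X -> R) (Xbar : pseudoMetricType R) (iota : X -> Xbar)
  (rel : Xbar -> Xbar -> Prop) : Prop :=
  hausdorff_space Xbar /\ compact [set: Xbar] /\
  injective iota /\
  (* iota is continuous ... *)
  (forall (x : X) (N : set Xbar), nbhs (iota x) N ->
     exists e : R, 0 < e /\ forall y, d x y < e -> N (iota y)) /\
  (* ... and a homeomorphism onto its image *)
  (forall (x : X) (e : R), 0 < e ->
     exists N : set Xbar, nbhs (iota x) N /\ forall y, N (iota y) -> d x y < e) /\
  open (range iota) /\ closure (range iota) = [set: Xbar] /\
  (forall phi, isometry d phi ->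
     exists Phi : Xbar -> Xbar, homeomorphism Phi /\ forall x, Phi (iota x) = iota (phi x)) /\
  (forall xi, boundary iota xi -> rel xi xi) /\
  (forall xi eta, boundary iota xi -> boundary iota eta -> rel xi eta -> rel eta xi) /\
  (forall xi eta zeta, boundary iota xi -> boundary iota eta -> boundary iota zeta ->
     rel xi eta -> rel eta zeta -> rel xi zeta) /\
  (forall phi (Phi : Xbar -> Xbar), isometry d phi -> homeomorphism Phi ->
     (forall x, Phi (iota x) = iota (phi x)) ->
     forall xi eta, boundary iota xi -> boundary iota eta ->
       rel xi eta -> rel (Phi xi) (Phi eta)).

Definition assumption_A {R : realType} {X : Type}
  (d : X -> X -> R) (Xbar : pseudoMetricType R) (iota : X -> Xbar)
  (rel : Xbar -> Xbar -> Prop) : Prop :=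
  forall (C : R) (g : R -> X), 0 < C -> geod_ray d g ->
    contracting d C (g @` `[0, +oo[) ->
    exists xi : Xbar, boundary iota xi /\ closed (cls iota rel xi) /\
      ends_at iota rel g xi /\
      forall x : nat -> X,
        escaping d (fun n => proj d (g @` `[0, +oo[) [set x n]) ->
        accum_into iota rel x xi.

Definition assumption_B {R : realType} {X : Type}
  (d : X -> X -> R) (Xbar : pseudoMetricType R) (iota : X -> Xbar)
  (rel : Xbar -> Xbar -> Prop) : Prop :=
  forall (C : R) (o : X) (G : nat -> set X), 0 < C ->
    (forall n, quasi_geodesic_set d (G n) /\ contracting d C (G n)) ->
    escaping d G ->
    exists (phi : nat -> nat) (xi : Xbar),
      (forall n, (phi n < phi n.+1)%N) /\ boundary iota xi /\
      forall (x : nat -> X),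
        (forall n, (G (phi n) `|` Omega d C o (G (phi n))) (x n)) ->
        forall p : Xbar, (fun n => iota (x n)) @ \oo --> p ->
          cls iota rel xi p.

Definition convergence_compactification {R : realType} {X : Type}
  (d : X -> X -> R) (Xbar : pseudoMetricType R) (iota : X -> Xbar)
  (rel : Xbar -> Xbar -> Prop) : Prop :=
  compactification_with_partition d iota rel /\
  assumption_A d iota rel /\ assumption_B d iota rel.

Definition non_pinched {R : realType} {X : Type}
  (d : X -> X -> R) {Xbar : topologicalType} (iota : X -> Xbar)
  (rel : Xbar -> Xbar -> Prop) (xi : Xbar) : Prop :=
  forall (x y : nat -> X) (g : nat -> R -> X),
    accum_into iota rel x xi -> accum_into iota rel y xi ->
    (forall n, geod_from_to d (g n) (x n) (y n)) ->
    escaping d (fun n => g n @` `[0, d (x n) (y n)]).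

Definition seg_contracting_freq {R : realType} {X : Type} (d : X -> X -> R)
  (r C L theta : R) (gamma : R -> X) (l : R) : Prop :=
  forall t : R, 0 < t -> t < (1 - theta) * l ->
    exists (s : R) (p : set X),
      `[s - L / 2, s + L / 2] `<=` `[t, t + theta * l] /\
      geodesic_set d p /\ contracting d C p /\
      forall u, s - L / 2 <= u -> u <= s + L / 2 -> dist_le d (gamma u) p r.

Definition ray_contracting_freq {R : realType} {X : Type} (d : X -> X -> R)
  (r C L theta : R) (gamma : R -> X) : Prop :=
  exists R0 : R, forall t, R0 <= t -> seg_contracting_freq d r C L theta gamma t.

(* Fix a window [a, b] on which gamma stays (r + C)-close to a C-contracting
   geodesic p.  Since [gamma^+] is non-pinched, for large N a geodesic from
   beta N to gamma N avoids the ball of radius b about o.  Contraction then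
   keeps the nearest point of beta N on p near that of gamma N, at distance
   about b from o, while the nearest point of o = beta 0 lies near gamma a.
   A geodesic whose endpoints have C-far nearest points on a contracting set
   passes 5C-close to both of them, and contracting sets are quasi-convex, so
   beta stays (r + 29 C)-close to p along the whole window. *)

From mathcomp Require Import all_boot all_order all_algebra.
From mathcomp Require Import all_classical all_reals all_analysis.
From mathcomp Require Import lra ring.
Import numFieldTopology.Exports numFieldNormedType.Exports.
Import Order.TTheory GRing.Theory Num.Theory.

Set Implicit Arguments.
Unset Strict Implicit.
Unset Printing Implicit Defensive.

Local Open Scope classical_set_scope.
Local Open Scope ring_scope.

Section MetricGeometry.
Context {R : realType} {X : Type} (d : X -> X -> R).
Hypothesis d_metric : is_metric d.

Lemma d_sym x y : d x y = d y x. Proof. by case: d_metric => _ []. Qed.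

Lemma d_triangle x y z : d x z <= d x y + d y z.
Proof. by case: d_metric => _ []. Qed.

Lemma d_refl x : d x x = 0. Proof. by case: d_metric => /(_ x x) [] _ ->. Qed.

Lemma d_ge0 x y : 0 <= d x y.
Proof. by have := d_triangle x y x; rewrite d_refl (d_sym y x); lra. Qed.

Lemma itvccP (a b x : R) : `[a, b]%classic x <-> a <= x <= b.
Proof. by rewrite /= in_itv. Qed.

Lemma subitvcc_lb (a b c e : R) : `[a, b] `<=` `[c, e] -> a <= b -> c <= a.
Proof.
move=> sub ab; have /sub/itvccP/andP[] // : `[a, b]%classic a.
by apply/itvccP; rewrite lexx ab.
Qed.

Lemma isom_on_sub (I J : set R) f : J `<=` I -> isom_on d I f -> isom_on d J f.
Proof. by move=> JI f_isom s t /JI Is /JI It; apply: f_isom. Qed.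

Lemma isom_on_subitv (c1 c2 a b : R) f : c1 <= a -> b <= c2 ->
  isom_on d `[c1, c2] f -> isom_on d `[a, b] f.
Proof.
move=> c1a bc2; apply: isom_on_sub => z /itvccP/andP[az zb].
by apply/itvccP/andP; split; [apply: le_trans az | apply: le_trans bc2].
Qed.

Lemma isom_on_rev (c1 c2 : R) f : isom_on d `[c1, c2] f ->
  isom_on d `[c1, c2] (fun s => f (c1 + c2 - s)).
Proof.
move=> f_isom s t /itvccP/andP[s1 s2] /itvccP/andP[t1 t2].
rewrite f_isom; first by rewrite distrC; congr `|_|; ring.
  by apply/itvccP/andP; split; lra.
by apply/itvccP/andP; split; lra.
Qed.

Lemma isom_onE (c1 c2 a b : R) f : isom_on d `[c1, c2] f ->
  c1 <= a -> a <= b -> b <= c2 -> d (f a) (f b) = b - a.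
Proof.
move=> f_isom c1a ab bc2; rewrite f_isom; first by rewrite distrC ger0_norm ?subr_ge0.
  by apply/itvccP/andP; split=> //; apply: le_trans bc2.
by apply/itvccP/andP; split=> //; apply: le_trans ab.
Qed.

Lemma geodesic_set_image (c1 c2 : R) f : c1 <= c2 -> isom_on d `[c1, c2] f ->
  geodesic_set d (f @` `[c1, c2]).
Proof.
move=> c12 f_isom; exists `[c1, c2]%classic, f; split; last by split.
split; first by exists c1; apply/itvccP; rewrite lexx c12.
split; first exact: itv_closed.
move=> a b z /itvccP/andP[c1a _] /itvccP/andP[_ bc2] az zb.
by apply/itvccP; rewrite (le_trans c1a az) (le_trans zb bc2).
Qed.

Lemma ray_isom_on f (c1 c2 : R) : geod_ray d f -> 0 <= c1 -> isom_on d `[c1, c2] f.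
Proof.
move=> f_ray c1_ge0; apply: isom_on_sub f_ray => z /itvccP/andP[c1z _].
by rewrite /= in_itv /= andbT (le_trans c1_ge0 c1z).
Qed.

Lemma ray_dist_origin f (t : R) : geod_ray d f -> 0 <= t -> d (f 0) (f t) = t.
Proof.
move=> f_ray t_ge0.
by rewrite (isom_onE (ray_isom_on f_ray (lexx 0)) (lexx 0) t_ge0 (lexx t)) subr0.
Qed.

Definition close_to (p : set X) (K : R) (x : X) := exists2 v, p v & d x v <= K.

Definition is_nearest (p : set X) (x xs : X) :=
  p xs /\ forall v, p v -> d x xs <= d x v.

Lemma close_to_dist_le p K x : close_to p K x -> dist_le d x p K.
Proof. by case=> v pv dv e e_gt0; exists v; split => //; lra. Qed.

Lemma dist_le_close_to p K x e : 0 < e -> dist_le d x p K -> close_to p (K + e) x.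
Proof. by move=> e_gt0 /(_ e e_gt0) [v [pv dv]]; exists v => //; apply: ltW. Qed.

Lemma close_to_le p K K' x : K <= K' -> close_to p K x -> close_to p K' x.
Proof. by move=> KK' [v pv dv]; exists v => //; apply: le_trans KK'. Qed.

Lemma close_to_trans p K x y : close_to p K y -> close_to p (d x y + K) x.
Proof.
by case=> v pv dv; exists v => //; apply: le_trans (d_triangle x y v) _; rewrite lerD2l.
Qed.

Lemma nearest_dist_le p o xs K x :
  is_nearest p o xs -> close_to p K x -> d o xs <= d o x + K.
Proof.
move=> [_ xs_min] [v pv dv]; apply: le_trans (xs_min v pv) _.
by apply: le_trans (d_triangle o x v) _; rewrite lerD2l.
Qed.

Lemma exists_nearest p : is_proper d -> dclosed d p -> p !=set0 ->
  forall x, exists xs, is_nearest p x xs.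
Proof.
move=> d_proper p_closed [v0 pv0] x.
pose E := [set d x v | v in p].
have E_inf : has_inf E.
  by split; [exists (d x v0), v0 | exists 0 => _ [v _ <-]; apply: d_ge0].
have inf_le v : p v -> inf E <= d x v by move=> pv; apply: (ge_inf E_inf.2); exists v.
have /choice[u u_min] : forall n : nat, exists v, p v /\ d x v < inf E + n.+1%:R^-1.
  move=> n.
  have n_inv_gt0 : 0 < n.+1%:R^-1 :> R by rewrite invr_gt0 ltr0Sn.
  by have [_ [v pv <-] ?] := inf_adherent n_inv_gt0 E_inf; exists v.
have u_bnd n : d x (u n) <= inf E + 1.
  apply/ltW/(lt_le_trans (u_min n).2).
  by rewrite lerD2l invf_le1 ?ltr0Sn // ler1n.
have [phi [y [phi_incr [_ u_cvg]]]] := d_proper x (inf E + 1) u u_bnd.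
have phi_ge n : (n <= phi n)%N by elim: n => // n ih; apply: leq_ltn_trans ih _.
have py : p y.
  apply: p_closed => e e_gt0; have [N _ HN] := cvgr_lt _ u_cvg e e_gt0.
  exists (u (phi N)); split; first exact: (u_min (phi N)).1.
  by rewrite d_sym; apply: (HN N); rewrite /= leqnn.
exists y; split => // w pw; apply: le_trans (inf_le w pw).
apply/ler_addgt0Pr => e e_gt0.
have e2_gt0 : 0 < e / 2 by rewrite divr_gt0.
have [N _ HN] : \forall n \near \oo,
    d (u (phi n)) y < e / 2 /\ n.+1%:R^-1 < e / 2.
  near=> n; split; near: n; first exact: cvgr_lt u_cvg _ e2_gt0.
  exact: (near_infty_natSinv_lt (PosNum e2_gt0)).
have [uy_lt N_inv_lt] := HN N (leqnn N).
have xu_lt : d x (u (phi N)) < inf E + e / 2.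
  apply: (lt_trans (u_min (phi N)).2); rewrite ltrD2l.
  by apply: le_lt_trans N_inv_lt; rewrite lef_pV2 ?posrE // ler_nat ltnS phi_ge.
have := d_triangle x (u (phi N)) y; lra.
Unshelve. all: by end_near.
Qed.

Section Contracting.
Variables (C : R) (p : set X).
Hypothesis C_gt0 : 0 < C.
Hypothesis p_contracting : contracting d C p.
Hypothesis p_nearest : forall x, exists xs, is_nearest p x xs.

Lemma far_geodesic_nearest_close f (c1 c2 : R) xs ys :
  c1 <= c2 -> isom_on d `[c1, c2] f ->
  (forall s, c1 <= s <= c2 -> forall v, p v -> C <= d (f s) v) ->
  is_nearest p (f c1) xs -> is_nearest p (f c2) ys -> d xs ys <= C.
Proof.
move=> c12 f_isom f_far [pxs xs_min] [pys ys_min].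
have f_far' : set_dist_ge d (f @` `[c1, c2]) p C.
  by move=> _ v [s /itvccP s_in <-] pv; apply: f_far.
apply: (p_contracting.2 _ (geodesic_set_image c12 f_isom) f_far').
- split=> //; exists (f c1); split; last exact: xs_min.
  by exists c1 => //; apply/itvccP; rewrite lexx c12.
- split=> //; exists (f c2); split; last exact: ys_min.
  by exists c2 => //; apply/itvccP; rewrite lexx c12.
Qed.

(* Take the first time s0 at which f enters the (K + C)-neighbourhood of p.
   Before s0 - C the geodesic stays C-far from p, so by contraction the
   nearest point of f (s0 - C) is C-close to xs, while f (s0 - C) itself is
   (K + 3C)-close to p. *)
Lemma geodesic_near_nearest f (c1 c2 K : R) xs :
  0 <= K -> c1 <= c2 -> isom_on d `[c1, c2] f ->
  close_to p K (f c2) -> is_nearest p (f c1) xs ->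
  exists2 s, c1 <= s <= c2 & d (f s) xs <= K + 4 * C.
Proof.
move=> K_ge0 c12 f_isom f2_close xs_near.
pose S := [set s | c1 <= s <= c2 /\ close_to p (K + C) (f s)].
have S_c2 : S c2.
  by split; [rewrite c12 lexx | apply: (close_to_le _ f2_close); rewrite lerDl ltW].
have S_inf : has_inf S by split; [exists c2 | exists c1 => s [/andP[]]].
have c1_le_inf : c1 <= inf S by apply: lb_le_inf; [exists c2 | move=> s [/andP[]]].
have [s' [/andP[c1s' s'c2] [v' pv' dv']] s'_lt] := inf_adherent C_gt0 S_inf.
have inf_le_s' : inf S <= s' by apply: (ge_inf S_inf.2); split; [lra | exists v'].
have dist_s' s : c1 <= s <= s' -> d (f s) v' <= s' - s + K + C.
  move=> /andP[c1s ss']; have := d_triangle (f s) (f s') v'.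
  rewrite (isom_onE f_isom c1s ss' s'c2); lra.
have [small | large] := ltP (inf S) (c1 + C).
  exists c1; first by rewrite lexx c12.
  have := xs_near.2 v' pv'; have := dist_s' c1 (ltac:(by rewrite lexx c1s')); lra.
pose s := inf S - C; have s_def : s = inf S - C by [].
have [ss ss_near] := p_nearest (f s).
have xs_ss : d xs ss <= C.
  apply: (far_geodesic_nearest_close (c2 := s)) xs_near ss_near; first lra.
    by apply: isom_on_subitv (lexx c1) _ f_isom; lra.
  move=> σ /andP[c1σ σs] v pv; rewrite leNgt; apply/negP => dσv.
  suff : inf S <= σ by lra.
  apply: (ge_inf S_inf.2); split; first by apply/andP; split; lra.
  by exists v => //; lra.
exists s; first by apply/andP; split; lra.
have := ss_near.2 v' pv'; have := dist_s' s (ltac:(apply/andP; split; lra)).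
have := d_triangle (f s) ss xs; rewrite (d_sym ss); lra.
Qed.

Lemma geodesic_near_nearest_rev f (c1 c2 K : R) ys :
  0 <= K -> c1 <= c2 -> isom_on d `[c1, c2] f ->
  close_to p K (f c1) -> is_nearest p (f c2) ys ->
  exists2 s, c1 <= s <= c2 & d (f s) ys <= K + 4 * C.
Proof.
move=> K_ge0 c12 f_isom f1_close ys_near.
have f1_close' : close_to p K (f (c1 + c2 - c2)) by rewrite addrK.
have ys_near' : is_nearest p (f (c1 + c2 - c1)) ys by rewrite (addrC c1) addrK.
have [s /andP[c1s sc2] ds] :=
  geodesic_near_nearest K_ge0 c12 (isom_on_rev f_isom) f1_close' ys_near'.
by exists (c1 + c2 - s) => //; apply/andP; split; lra.
Qed.

Lemma geodesic_near_nearests_of_far f (c1 c2 : R) xs ys :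
  c1 <= c2 -> isom_on d `[c1, c2] f ->
  is_nearest p (f c1) xs -> is_nearest p (f c2) ys -> C < d xs ys ->
  (exists2 s, c1 <= s <= c2 & d (f s) xs <= 5 * C) /\
  (exists2 s, c1 <= s <= c2 & d (f s) ys <= 5 * C).
Proof.
move=> c12 f_isom xs_near ys_near xs_ys.
have [[σ /andP[c1σ σc2] f_close] | f_far] :=
  pselect (exists2 σ, c1 <= σ <= c2 & close_to p C (f σ)); last first.
  suff : d xs ys <= C by lra.
  apply: far_geodesic_nearest_close c12 f_isom _ xs_near ys_near.
  move=> σ σ_in v pv; rewrite leNgt; apply/negP => dσv.
  by apply: f_far; exists σ => //; exists v => //; apply: ltW.
have C_ge0 : 0 <= C := ltW C_gt0.
split.
  have [|s /andP[c1s sσ] ds] := geodesic_near_nearest C_ge0 c1σ _ f_close xs_near.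
    exact: isom_on_subitv (lexx c1) σc2 f_isom.
  by exists s; [apply/andP; split; lra | lra].
have [|s /andP[σs sc2] ds] := geodesic_near_nearest_rev C_ge0 σc2 _ f_close ys_near.
  exact: isom_on_subitv c1σ (lexx c2) f_isom.
by exists s; [apply/andP; split; lra | lra].
Qed.

Lemma geodesic_close_of_close_ends f (c1 c2 K t : R) :
  0 <= K -> c1 <= t <= c2 -> isom_on d `[c1, c2] f ->
  close_to p K (f c1) -> close_to p K (f c2) -> close_to p (2 * K + 8 * C) (f t).
Proof.
move=> K_ge0 /andP[c1t tc2] f_isom f1_close f2_close.
have [ts ts_near] := p_nearest (f t).
have [sR /andP[tsR sRc2] dR] := geodesic_near_nearest K_ge0 tc2
  (isom_on_subitv c1t (lexx c2) f_isom) f2_close ts_near.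
have [sL /andP[c1sL sLt] dL] := geodesic_near_nearest_rev K_ge0 c1t
  (isom_on_subitv (lexx c1) tc2 f_isom) f1_close ts_near.
exists ts; first exact: ts_near.1.
have sLR : sR - sL <= 2 * K + 8 * C.
  have := d_triangle (f sL) ts (f sR).
  by rewrite (d_sym ts) (isom_onE f_isom c1sL _ sRc2); lra.
have [tL | Lt] := lerP (t - sL) (K + 4 * C).
  have := d_triangle (f t) (f sL) ts.
  rewrite (d_sym (f t) (f sL)) (isom_onE f_isom c1sL sLt tc2); lra.
have := d_triangle (f t) (f sR) ts; rewrite (isom_onE f_isom c1t tsR sRc2); lra.
Qed.

Lemma close_to_stretch f (c1 c2 K delta t1 t2 u : R) :
  0 <= K -> 0 <= delta -> isom_on d `[c1, c2] f ->
  c1 <= t1 <= c2 -> c1 <= t2 <= c2 -> c1 <= u <= c2 -> t1 - delta <= u <= t2 + delta ->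
  close_to p K (f t1) -> close_to p K (f t2) ->
  close_to p (2 * K + 8 * C + delta) (f u).
Proof.
move=> K_ge0 delta_ge0 f_isom /andP[c1t1 t1c2] /andP[c1t2 t2c2] /andP[c1u uc2]
  /andP[t1u ut2] t1_close t2_close.
have C_ge0 : 0 <= C := ltW C_gt0.
have between_le : 2 * K + 8 * C <= 2 * K + 8 * C + delta by lra.
have [ut1 | t1u'] := lerP u t1; have [ut2' | t2u] := lerP u t2.
- apply: close_to_le (close_to_trans (f u) t1_close).
  by rewrite (isom_onE f_isom c1u ut1 t1c2); lra.
- apply: close_to_le between_le (geodesic_close_of_close_ends K_ge0 _ _ t2_close t1_close).
  + by rewrite (ltW t2u).
  + exact: isom_on_subitv c1t2 t1c2 f_isom.
- apply: close_to_le between_le (geodesic_close_of_close_ends K_ge0 _ _ t1_close t2_close).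
  + by rewrite (ltW t1u').
  + exact: isom_on_subitv c1t1 t2c2 f_isom.
- apply: close_to_le (close_to_trans (f u) t2_close).
  by rewrite d_sym (isom_onE f_isom c1t2 (ltW t2u) uc2); lra.
Qed.

Lemma ray_nearest_far gam (b N K : R) ys :
  0 <= K -> geod_ray d gam -> 0 <= b -> b <= N ->
  close_to p K (gam b) -> is_nearest p (gam N) ys -> b - K - 4 * C <= d (gam 0) ys.
Proof.
move=> K_ge0 gam_ray b_ge0 bN gam_close ys_near.
have [s /andP[bs sN] ds] :=
  geodesic_near_nearest_rev K_ge0 bN (ray_isom_on gam_ray b_ge0) gam_close ys_near.
have := d_triangle (gam 0) ys (gam s).
by rewrite (ray_dist_origin gam_ray (le_trans b_ge0 bs)) (d_sym ys); lra.
Qed.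

Lemma nearest_far_of_far_geodesic g x y o (b : R) xs ys :
  geod_from_to d g x y -> (forall z, (g @` `[0, d x y]) z -> b <= d o z) ->
  is_nearest p x xs -> is_nearest p y ys ->
  d o ys - C <= d o xs \/ b - 5 * C <= d o xs.
Proof.
move=> [g0 [gl [l_ge0 g_isom]]] g_far xs_near ys_near.
have [xs_ys | xs_ys] := lerP (d xs ys) C.
  by left; have := d_triangle o xs ys; lra.
rewrite -g0 in xs_near; rewrite -gl in ys_near.
have [[s s_in ds] _] := geodesic_near_nearests_of_far l_ge0 g_isom xs_near ys_near xs_ys.
right; have := g_far (g s) (ltac:(by exists s => //; apply/itvccP)).
by have := d_triangle o xs (g s); rewrite (d_sym xs); lra.
Qed.

Lemma ray_close_on_window (r' a b N : R) gam bet g :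
  0 <= r' -> geod_ray d gam -> geod_ray d bet -> bet 0 = gam 0 ->
  0 <= a -> 2 * r' + 6 * C < b - a -> b <= N ->
  (forall u, a <= u <= b -> close_to p r' (gam u)) ->
  geod_from_to d g (bet N) (gam N) ->
  (forall z, (g @` `[0, d (bet N) (gam N)]) z -> b <= d (gam 0) z) ->
  forall u, a <= u <= b -> close_to p (r' + 28 * C) (bet u).
Proof.
move=> r'_ge0 gam_ray bet_ray bet0 a_ge0 window_long bN gam_close g_geod g_far.
have C_ge0 : 0 <= C := ltW C_gt0.
have ab : a <= b by lra.
have [xs xs_near] := p_nearest (gam 0).
have [ys ys_near] := p_nearest (bet N).
have [ygs ygs_near] := p_nearest (gam N).
have o_xs : d (gam 0) xs <= a + r'.
  have := nearest_dist_le xs_near (gam_close a (ltac:(by rewrite lexx ab))).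
  by rewrite ray_dist_origin.
have o_ygs : b - r' - 4 * C <= d (gam 0) ygs.
  apply: ray_nearest_far r'_ge0 gam_ray _ bN _ ygs_near; first lra.
  by apply: gam_close; rewrite lexx ab.
have o_ys : b - r' - 5 * C <= d (gam 0) ys.
  by case: (nearest_far_of_far_geodesic g_geod g_far ys_near ygs_near); lra.
have xs_ys : C < d xs ys by have := d_triangle (gam 0) xs ys; lra.
rewrite -bet0 in xs_near o_xs o_ys.
have [[t1 /andP[t1_ge0 t1N] bet_t1] [t2 /andP[t2_ge0 t2N] bet_t2]] :=
  geodesic_near_nearests_of_far (le_trans a_ge0 (le_trans ab bN))
    (ray_isom_on bet_ray (lexx 0)) xs_near ys_near xs_ys.
have t1_le : t1 <= a + r' + 5 * C.
  have := d_triangle (bet 0) xs (bet t1).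
  by rewrite (ray_dist_origin bet_ray t1_ge0) (d_sym xs); lra.
have t2_ge : b - r' - 10 * C <= t2.
  by have := d_triangle (bet 0) (bet t2) ys; rewrite (ray_dist_origin bet_ray t2_ge0); lra.
have bet_t1_close : close_to p (5 * C) (bet t1) by exists xs => //; apply: xs_near.1.
have bet_t2_close : close_to p (5 * C) (bet t2) by exists ys => //; apply: ys_near.1.
move=> u /andP[au ub].
have bound : 2 * (5 * C) + 8 * C + (r' + 10 * C) <= r' + 28 * C by lra.
have bet_isom : isom_on d `[0, N] bet := ray_isom_on bet_ray (lexx 0).
apply: close_to_le bound
  (close_to_stretch _ _ bet_isom _ _ _ _ bet_t1_close bet_t2_close);
  by [lra | apply/andP; split; lra].
Qed.

End Contracting.
End MetricGeometry.

Lemma far_geodesic_of_non_pinched {R : realType} {X : Type} (d : X -> X -> R)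
    {Xbar : topologicalType} (iota : X -> Xbar) (rel : Xbar -> Xbar -> Prop)
    (gam bet : R -> X) (xi : Xbar) (o : X) (M : R) :
  is_geodesic_space d -> non_pinched d iota rel xi ->
  ends_at iota rel gam xi -> ends_at iota rel bet xi ->
  exists N g, M <= N /\ geod_from_to d g (bet N) (gam N) /\
    forall z, (g @` `[0, d (bet N) (gam N)]) z -> M <= d o z.
Proof.
move=> d_geodesic xi_np gam_end bet_end.
have [g g_geod] := choice (fun n : nat => d_geodesic (bet n%:R) (gam n%:R)).
have nat_pinfty : to_pinfty (fun n : nat => n%:R : R) by move=> ?; apply: nbhs_infty_ger.
have [N1 _ g_far] := xi_np _ _ g (bet_end _ (fun n => ler0n _ n) nat_pinfty)
  (gam_end _ (fun n => ler0n _ n) nat_pinfty) g_geod o M.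
have [N2 _ N2_ge] := nbhs_infty_ger M.
exists (maxn N1 N2)%:R, (g (maxn N1 N2)); split; first exact/N2_ge/leq_maxr.
by split=> //; apply/g_far/leq_maxl.
Qed.

Theorem lemma2p24 (R : realType) (X : Type) (d : X -> X -> R)
  (Xbar : pseudoMetricType R) (iota : X -> Xbar) (rel : Xbar -> Xbar -> Prop) :
  is_metric d -> is_proper d -> is_geodesic_space d ->
  convergence_compactification d iota rel ->
  forall r C : R, 0 < C -> C <= r ->
  exists rhat L0 : R,
    forall (L theta : R) (o : X) (gamma : R -> X) (xi : Xbar),
      L0 <= L -> 0 < theta -> theta <= 1 ->
      geod_ray d gamma -> gamma 0 = o ->
      ray_contracting_freq d r C L theta gamma ->
      boundary iota xi -> ends_at iota rel gamma xi ->
      (forall eta, cls iota rel xi eta -> non_pinched d iota rel eta) ->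
      forall beta : R -> X,
        geod_ray d beta -> beta 0 = o -> ends_at iota rel beta xi ->
        ray_contracting_freq d rhat C L theta beta.
Proof.
move=> d_metric d_proper d_geodesic [[_ [_ [_ [_ [_ [_ [_ [_ [rel_refl _]]]]]]]]] _]
  r C C_gt0 C_le_r.
exists (r + 29 * C), (2 * r + 9 * C).
move=> L theta o gam xi L0L _ _ gam_ray <- [R0 gam_freq] xi_bd gam_end xi_np
  bet bet_ray bet0 bet_end.
exists R0 => l R0l t t_gt0 t_lt.
have [s [p [win_sub [p_geod [p_contr gam_near]]]]] := gam_freq l R0l t t_gt0 t_lt.
exists s, p; split=> //; split=> //; split=> // u u1 u2.
have a_ge0 : 0 <= s - L / 2.
  by apply: le_trans (ltW t_gt0) (subitvcc_lb win_sub _); lra.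
have gam_close w : s - L / 2 <= w <= s + L / 2 -> close_to d p (r + C) (gam w).
  by move=> /andP[w1 w2]; apply: dist_le_close_to C_gt0 (gam_near w w1 w2).
have [v0 pv0 _] := gam_close (s - L / 2) (ltac:(apply/andP; split; lra)).
have p_nearest := exists_nearest d_metric d_proper p_contr.1 (ex_intro _ v0 pv0).
have [N [g [bN [g_geod g_far]]]] := far_geodesic_of_non_pinched (gam 0) (s + L / 2)
  d_geodesic (xi_np xi (conj xi_bd (rel_refl xi xi_bd))) gam_end bet_end.
have window_long : 2 * (r + C) + 6 * C < (s + L / 2) - (s - L / 2) by lra.
have rC_ge0 : 0 <= r + C by lra.
have bet_close := ray_close_on_window d_metric C_gt0 p_contr p_nearest
  rC_ge0 gam_ray bet_ray bet0 a_ge0 window_long bN gam_close g_geod g_far.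
have bound : r + C + 28 * C <= r + 29 * C by lra.
by apply/close_to_dist_le/(close_to_le bound)/bet_close/andP.
Qed.
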